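(* Let $\mathbb{T}=[0,T]$ with $T\in(0,\infty)$, and suppose $F(\omega^0,\omega^1,m,t)=G(m[0,t])$ for some continuous $G:[0,1]\to\mathbb{R}$ which is differentiable on $(0,1)$. If $F$ satisfies condition (B.2), then $G$ is constant.
   Context: $(\Omega^{\mathrm{com}},\mathcal{F}^{\mathrm{com}},\mathbb{F}^{\mathrm{com}},\mathbb{P}^{\mathrm{com}})$ and $(\Omega^{\mathrm{ind}},\mathcal{F}^{\mathrm{ind}},\mathbb{F}^{\mathrm{ind}},\mathbb{P}^{\mathrm{ind}})$ are filtered probability spaces (filtrations indexed by $\mathbb{T}$); $\Omega^{\mathrm{com}}\times\Omega^{\mathrm{ind}}$ carries $\mathbb{P}^{\mathrm{com}}\times\mathbb{P}^{\mathrm{ind}}$, and $W^0,W^1$ are the coordinate projections. $\mathcal{P}(\mathbb{T})$ is the set of Borel probability measures on $\mathbb{T}$ and $m[0,t]:=m([0,t])$. An $\mathbb{F}^{\mathrm{com}}$-adapted random measure is a $\mathcal{P}(\mathbb{T})$-valued random variable $\mu$ with $\mu[0,t]$ $\mathcal{F}^{\mathrm{com}}_t$-measurable for each $t$ (deterministic measures are such). Condition (B.2): for every pair of $\mathbb{F}^{\mathrm{com}}$-adapted random measures $\mu,\tilde\mu$ with $\mu[0,t]\ge\tilde\mu[0,t]$ for all $t\in\mathbb{T}$ a.s., the process $M_t=F(W^0,W^1,\tilde\mu,t)-F(W^0,W^1,\mu,t)$ is a submartingale. *)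

From HB Require Import structures.
From mathcomp Require Import all_boot all_order all_algebra.
From mathcomp Require Import all_classical all_reals all_analysis.
Set Implicit Arguments. Unset Strict Implicit. Unset Printing Implicit Defensive.
Import Order.TTheory GRing.Theory Num.Theory.
Import numFieldNormedType.Exports.
Local Open Scope classical_set_scope.
Local Open Scope ring_scope.

(* A Borel probability measure on T = [0,T] is represented as a Borel
   probability measure on R concentrated on [0,T]. *)
Definition is_PT (R : realType) (T : R) (m : probability R R) : Prop :=
  m `[0, T]%classic = 1%E.

Definition cdfm (R : realType) (m : probability R R) (t : R) : R :=
  fine (m `[0, t]%classic).

Definition Gmeasurable (d : measure_display) (O : measurableType d) (R : realType)
  (G : set (set O)) (f : O -> R) : Prop :=
  forall B : set R, measurable B -> G (f @^-1` B).

Definition filtration (d : measure_display) (O : measurableType d) (R : realType)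
  (T : R) (F : R -> set (set O)) : Prop :=
  (forall t, 0 <= t <= T -> sigma_algebra setT (F t) /\ F t `<=` measurable) /\
  (forall s t, 0 <= s -> s <= t -> t <= T -> F s `<=` F t).

Definition prod_filtration (dc di : measure_display)
  (Oc : measurableType dc) (Oi : measurableType di) (R : realType)
  (Fc : R -> set (set Oc)) (Fi : R -> set (set Oi)) (t : R)
  : set (set (Oc * Oi)) :=
  <<s [set A `*` B | A in Fc t & B in Fi t] >>.

(* submartingale: adapted, integrable, and E[M_t | F_s] >= M_s, the latter
   stated through the defining property of conditional expectation *)
Definition submartingale (d : measure_display) (O : measurableType d)
  (R : realType) (P : probability O R) (T : R) (F : R -> set (set O))
  (M : R -> O -> R) : Prop :=
  (forall t, 0 <= t <= T -> Gmeasurable (F t) (M t)) /\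
  (forall t, 0 <= t <= T -> P.-integrable setT (fun w => (M t w)%:E)) /\
  (forall s t, 0 <= s -> s <= t -> t <= T -> forall A, F s A ->
     (\int[P]_(w in A) (M s w)%:E <= \int[P]_(w in A) (M t w)%:E)%E).

Definition adapted_random_measure (dc : measure_display) (Oc : measurableType dc)
  (R : realType) (T : R) (Fc : R -> set (set Oc))
  (mu : Oc -> probability R R) : Prop :=
  (forall w, is_PT T (mu w)) /\
  (forall B : set R, measurable B -> measurable_fun setT (fun w => fine (mu w B))) /\
  (forall t, 0 <= t <= T -> Gmeasurable (Fc t) (fun w => cdfm (mu w) t)).

Definition condB2 (R : realType) (T : R) (dc di : measure_display)
  (Oc : measurableType dc) (Oi : measurableType di)
  (Pc : probability Oc R) (Pi : probability Oi R)
  (Fc : R -> set (set Oc)) (Fi : R -> set (set Oi))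
  (F : Oc -> Oi -> probability R R -> R -> R) : Prop :=
  forall mu mut : Oc -> probability R R,
    adapted_random_measure T Fc mu -> adapted_random_measure T Fc mut ->
    {ae Pc, forall w, forall t, 0 <= t <= T -> cdfm (mut w) t <= cdfm (mu w) t} ->
    submartingale (Pc \x Pi)%E T (prod_filtration Fc Fi)
      (fun t w => F w.1 w.2 (mut w.1) t - F w.1 w.2 (mu w.1) t).

From HB Require Import structures.
From mathcomp Require Import all_boot all_order all_algebra.
From mathcomp Require Import all_classical all_reals all_analysis.
Set Implicit Arguments. Unset Strict Implicit. Unset Printing Implicit Defensive.
Import Order.TTheory GRing.Theory Num.Theory.
Import numFieldNormedType.Exports.
Local Open Scope classical_set_scope.
Local Open Scope ring_scope.

(* Deterministic measures are adapted random measures, and for them (B.2)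
   says that t |-> G(nu[0,t]) - G(mu[0,t]) is nondecreasing whenever nu is
   dominated by mu.  For x in [0,1] let mu_x := x d_0 + (1 - x) d_(T/2), so
   that mu_x[0,0] = x and mu_x[0,T/2] = 1.  Comparing mu_x with d_0 (above it)
   and with d_T (below it) between the times 0 and T/2 gives G x <= G 1 and
   G 1 <= G x. *)

Section two_point.
Variables (R : realType) (p : R) (p01 : 0 <= p <= 1) (a b : R).

Let p_ge0 : 0 <= p. Proof. by case/andP: p01. Qed.
Let q_ge0 : 0 <= 1 - p. Proof. by case/andP: p01; rewrite subr_ge0. Qed.

Definition two_point : set R -> \bar R :=
  measure_add (mscale (NngNum p_ge0) \d_a) (mscale (NngNum q_ge0) \d_b).

HB.instance Definition _ := Measure.on two_point.

Lemma two_pointE A : two_point A = (p * (a \in A)%:R + (1 - p) * (b \in A)%:R)%:E.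
Proof.
rewrite /two_point measure_addE /mscale /= /dirac /mscale /=.
by rewrite /dirac !indicE -!EFinM -EFinD.
Qed.

Let two_point_setT : two_point setT = 1%E.
Proof. by rewrite two_pointE !in_setT !mulr1 addrC subrK. Qed.

HB.instance Definition _ :=
  Measure_isProbability.Build _ _ _ two_point two_point_setT.
End two_point.

Section cdfm.
Variable R : realType.
Implicit Types (m : probability R R) (a t T : R).

Lemma in_itv0 x t : (x \in `[0, t]%classic) = (0 <= x <= t).
Proof. by apply/idP/idP; rewrite inE /= in_itv. Qed.

Lemma cdfm_ge0 m t : 0 <= cdfm m t.
Proof. exact: fine_ge0. Qed.

Lemma cdfm_le1 m t : cdfm m t <= 1.
Proof.
have m_le1 := probability_le1 m (measurable_itv `[0, t]).
rewrite /cdfm -[leRHS]/(fine 1%E) fine_le //.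
by rewrite ge0_fin_numE // (le_lt_trans m_le1) // ltey.
Qed.

Lemma cdfm_dirac a t :
  cdfm (\d_a : probability R R) t = ((0 <= a) && (a <= t))%:R.
Proof. by rewrite /cdfm /= /dirac indicE in_itv0. Qed.

Lemma cdfm_two_point p (p01 : 0 <= p <= 1) a b t :
  cdfm (two_point p01 a b : probability R R) t =
  p * ((0 <= a) && (a <= t))%:R + (1 - p) * ((0 <= b) && (b <= t))%:R.
Proof. by rewrite /cdfm /= two_pointE !in_itv0. Qed.

Lemma cdfm_PT T m : is_PT T m -> cdfm m T = 1.
Proof. by rewrite /cdfm => ->. Qed.

Lemma cdfm_le_dirac0 m t : 0 <= t -> cdfm m t <= cdfm (\d_(0 : R)) t.
Proof. by move=> t0; rewrite cdfm_dirac lexx t0 cdfm_le1. Qed.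

Lemma cdfm_dirac_le T m : 0 < T -> is_PT T m ->
  forall t, 0 <= t <= T -> cdfm (\d_T : probability R R) t <= cdfm m t.
Proof.
move=> T0 mT t /andP[t0 tT]; rewrite cdfm_dirac.
have [_|Tt] := ltP t T; first by rewrite andbF cdfm_ge0.
have -> : t = T by apply/le_anti; rewrite tT Tt.
by rewrite (ltW T0) cdfm_PT.
Qed.

Lemma is_PT_dirac T a : 0 <= a <= T -> is_PT T (\d_a : probability R R).
Proof. by move=> aT; rewrite /is_PT /= /dirac indicE in_itv0 aT. Qed.

Lemma is_PT_two_point T p (p01 : 0 <= p <= 1) a b :
  0 <= a <= T -> 0 <= b <= T -> is_PT T (two_point p01 a b : probability R R).
Proof.
by move=> aT bT; rewrite /is_PT /= two_pointE !in_itv0 aT bT !mulr1 addrC subrK.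
Qed.

End cdfm.

Lemma filtration_setT (d : measure_display) (O : measurableType d) (R : realType)
    (T : R) (F : R -> set (set O)) t :
  filtration T F -> 0 <= t <= T -> F t setT.
Proof.
move=> hF tT; have [[F0 FC _] _] := hF.1 t tT.
by have := FC _ F0; rewrite setD0.
Qed.

Lemma prod_filtration_setT (dc di : measure_display)
    (Oc : measurableType dc) (Oi : measurableType di) (R : realType) (T : R)
    (Fc : R -> set (set Oc)) (Fi : R -> set (set Oi)) t :
  filtration T Fc -> filtration T Fi -> 0 <= t <= T ->
  prod_filtration Fc Fi t setT.
Proof.
move=> hFc hFi tT; apply: sub_gen_smallest; exists setT.
  exact: filtration_setT hFc tT.
by exists setT; [exact: filtration_setT hFi tT | exact: setXTT].
Qed.

Lemma adapted_random_measure_cst (dc : measure_display) (Oc : measurableType dc)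
    (R : realType) (T : R) (Fc : R -> set (set Oc)) (m : probability R R) :
  filtration T Fc -> is_PT T m -> adapted_random_measure T Fc (fun=> m).
Proof.
move=> hFc mT; split=> //; split=> [B _|t tT B _]; first exact: measurable_cst.
have [[Fc0 _ _] _] := hFc.1 t tT.
by rewrite preimage_cst; case: ifP => _; [exact: filtration_setT hFc tT|].
Qed.

Section condB2_deterministic.
Variables (R : realType) (T : R) (hT : 0 < T).
Variables (dc di : measure_display) (Oc : measurableType dc) (Oi : measurableType di).
Variables (Pc : probability Oc R) (Pi : probability Oi R).
Variables (Fc : R -> set (set Oc)) (Fi : R -> set (set Oi)).
Hypotheses (hFc : filtration T Fc) (hFi : filtration T Fi).
Variables (F : Oc -> Oi -> probability R R -> R -> R) (G : R -> R).
Hypothesis hF : forall w0 w1 (m : probability R R) t, is_PT T m -> 0 <= t <= T ->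
  F w0 w1 m t = G (cdfm m t).
Hypothesis hB2 : condB2 T Pc Pi Fc Fi F.

Lemma condB2_cdfm_increment_mono (m m' : probability R R) s t :
  is_PT T m -> is_PT T m' ->
  (forall u, 0 <= u <= T -> cdfm m' u <= cdfm m u) ->
  0 <= s -> s <= t -> t <= T ->
  G (cdfm m' s) - G (cdfm m s) <= G (cdfm m' t) - G (cdfm m t).
Proof.
move=> mT m'T m'_le_m s0 st tT.
have sT : 0 <= s <= T by rewrite s0 (le_trans st tT).
have tT' : 0 <= t <= T by rewrite (le_trans s0 st) tT.
have [_ [_ sub]] := hB2 (adapted_random_measure_cst hFc mT)
  (adapted_random_measure_cst hFc m'T) (aeW _ (fun=> m'_le_m)).
have := sub s t s0 st tT setT (prod_filtration_setT hFc hFi sT).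
have incrE u : 0 <= u <= T ->
    (fun w : Oc * Oi => (F w.1 w.2 m' u - F w.1 w.2 m u)%:E) =
    cst (G (cdfm m' u) - G (cdfm m u))%:E.
  by move=> uT; apply/funext => w; rewrite /= !hF.
rewrite /= (incrE s sT) (incrE t tT') !integral_cst //= probability_setT.
by rewrite !mule1 lee_fin.
Qed.

Let T2_gt0 : 0 < T / 2. Proof. by rewrite divr_gt0. Qed.
Let T2_lt_T : T / 2 < T. Proof. by rewrite ltr_pdivrMr // ltr_pMr // ltr1n. Qed.

Variables (x : R) (x01 : 0 <= x <= 1).

Let mu := (two_point x01 0 (T / 2) : probability R R).

Let is_PT_mu : is_PT T mu.
Proof. by apply: is_PT_two_point; rewrite ?lexx ?(ltW hT) ?(ltW T2_gt0) ?(ltW T2_lt_T). Qed.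

Let cdfm_mu0 : cdfm mu 0 = x.
Proof. by rewrite cdfm_two_point lexx (lt_geF T2_gt0) andbF /= mulr1 mulr0 addr0. Qed.

Let cdfm_muT2 : cdfm mu (T / 2) = 1.
Proof. by rewrite cdfm_two_point !lexx (ltW T2_gt0) /= !mulr1 addrC subrK. Qed.

Lemma condB2_G_le_G1 : G x <= G 1.
Proof.
have d0T : is_PT T (\d_(0 : R)) by apply: is_PT_dirac; rewrite lexx ltW.
have mu_le_d0 u : 0 <= u <= T -> cdfm mu u <= cdfm \d_(0 : R) u.
  by case/andP=> u0 _; exact: cdfm_le_dirac0.
have := condB2_cdfm_increment_mono d0T is_PT_mu mu_le_d0
  (lexx 0) (ltW T2_gt0) (ltW T2_lt_T).
by rewrite cdfm_mu0 cdfm_muT2 !cdfm_dirac !lexx (ltW T2_gt0) subrr subr_le0.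
Qed.

Lemma condB2_G1_le_G : G 1 <= G x.
Proof.
have dTT : is_PT T (\d_T) by apply: is_PT_dirac; rewrite lexx ltW.
have := condB2_cdfm_increment_mono is_PT_mu dTT (cdfm_dirac_le hT is_PT_mu)
  (lexx 0) (ltW T2_gt0) (ltW T2_lt_T).
by rewrite cdfm_mu0 cdfm_muT2 !cdfm_dirac (lt_geF hT) (lt_geF T2_lt_T) !andbF lerD2l lerN2.
Qed.

End condB2_deterministic.

Theorem mainTheorem5 (R : realType) (T : R) (hT : 0 < T)
  (dc di : measure_display) (Oc : measurableType dc) (Oi : measurableType di)
  (Pc : probability Oc R) (Pi : probability Oi R)
  (Fc : R -> set (set Oc)) (Fi : R -> set (set Oi))
  (hFc : filtration T Fc) (hFi : filtration T Fi)
  (F : Oc -> Oi -> probability R R -> R -> R) (G : R -> R)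
  (hF : forall w0 w1 (m : probability R R) t, is_PT T m -> 0 <= t <= T ->
          F w0 w1 m t = G (cdfm m t))
  (hGc : {within `[0, 1], continuous G})
  (hGd : forall x, 0 < x < 1 -> derivable G x 1)
  (hB2 : condB2 T Pc Pi Fc Fi F) :
  forall x y, 0 <= x <= 1 -> 0 <= y <= 1 -> G x = G y.
Proof.
have G_eq_G1 z (z01 : 0 <= z <= 1) : G z = G 1.
  by apply/le_anti; rewrite (condB2_G_le_G1 hT hFc hFi hF hB2 z01)
    (condB2_G1_le_G hT hFc hFi hF hB2 z01).
by move=> x y x01 y01; rewrite !G_eq_G1.
Qed.
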